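(* Let $n,p,q$ be positive integers with $q<p$, let $\sigma>0$, and let $\boldsymbol{\Sigma}\in\mathbb{R}^{p\times p}$ be symmetric positive definite. Let $\mathbf{y}=\mathbf{X}\boldsymbol{\beta}^\star+\boldsymbol{\epsilon}$, where the rows of $\mathbf{X}\in\mathbb{R}^{n\times p}$ are i.i.d. $\mathcal{N}(0,\boldsymbol{\Sigma})$, $\boldsymbol{\epsilon}\sim\mathcal{N}(0,\sigma^2\mathbb{I}_n)$ is independent of $\mathbf{X}$, and $\boldsymbol{\beta}^\star=(\boldsymbol{\beta}_1^{\star\prime},\mathbf{0}')'$ with $\boldsymbol{\beta}_1^\star\in\mathbb{R}^q$ having all entries nonzero. Let $\lambda,\eta>0$ and let $\widehat{\boldsymbol{\beta}}$ be the generalized Elastic Net estimator (defined in the context). Then $$\mathbb{P}\left(\mathrm{sign}(\widehat{\boldsymbol{\beta}})=\mathrm{sign}(\boldsymbol{\beta}^\star)\right)\geq \mathbb{P}(A_n\cap B_n),$$ where $A_n$ is the event $$\left| \left(\mathcal{C}_{11}^{n,\boldsymbol{\Sigma}}\right)^{-1}W_n(1) \right| < \sqrt{n}\left( \left|\boldsymbol{\beta}_1^\star\right| - \frac{\lambda}{2n}\left|\left(\mathcal{C}_{11}^{n,\boldsymbol{\Sigma}}\right)^{-1}\mathrm{sign}(\boldsymbol{\beta}_1^\star)\right| - \frac{\eta}{n}\left|\left(\mathcal{C}_{11}^{n,\boldsymbol{\Sigma}}\right)^{-1}\boldsymbol{\Sigma}_{11}\boldsymbol{\beta}_1^\star\right|\right)$$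 and $B_n$ is the event $$\left|\mathcal{C}_{21}^{n,\boldsymbol{\Sigma}}\left(\mathcal{C}_{11}^{n,\boldsymbol{\Sigma}}\right)^{-1}W_n(1)-W_n(2)\right| \leq \frac{\lambda}{2\sqrt{n}} -\frac{\lambda}{2\sqrt{n}}\left| \mathcal{C}_{21}^{n,\boldsymbol{\Sigma}}\left(\mathcal{C}_{11}^{n,\boldsymbol{\Sigma}}\right)^{-1}\left(\mathrm{sign}(\boldsymbol{\beta}_1^\star) +\frac{2\eta}{\lambda} \boldsymbol{\Sigma}_{11}\boldsymbol{\beta}_1^\star \right)-\frac{2\eta}{\lambda}\boldsymbol{\Sigma}_{21}\boldsymbol{\beta}_1^\star \right|,$$ all absolute values and inequalities between vectors being understood componentwise.
   Context: Notation: $\boldsymbol{\Sigma}=\boldsymbol{U}\boldsymbol{D}\boldsymbol{U}'$ is the spectral decomposition, $\boldsymbol{\Sigma}^{1/2}=\boldsymbol{U}\boldsymbol{D}^{1/2}\boldsymbol{U}'$, $\boldsymbol{\Sigma}^{-1/2}=\boldsymbol{U}\boldsymbol{D}^{-1/2}\boldsymbol{U}'$, and $\widetilde{\mathbf{X}}=\mathbf{X}\boldsymbol{\Sigma}^{-1/2}$. The generalized Elastic Net (gEN) estimator is $\widehat{\boldsymbol{\beta}}=\boldsymbol{\Sigma}^{-1/2}\widehat{\widetilde{\boldsymbol{\beta}}}$, where $\widehat{\widetilde{\boldsymbol{\beta}}}$ is the (unique) minimizer over $\widetilde{\boldsymbol{\beta}}\in\mathbb{R}^p$ of $$\|\mathbf{y}-\widetilde{\mathbf{X}}\widetilde{\boldsymbol{\beta}}\|_2^2+\lambda\|\boldsymbol{\Sigma}^{-1/2}\widetilde{\boldsymbol{\beta}}\|_1+\eta\|\widetilde{\boldsymbol{\beta}}\|_2^2.$$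 $\mathbf{X}_1$ (resp. $\mathbf{X}_2$) denotes the first $q$ (resp. last $p-q$) columns of $\mathbf{X}$; $C_n=n^{-1}\mathbf{X}'\mathbf{X}$ with blocks $C_{ij}^n=n^{-1}\mathbf{X}_i'\mathbf{X}_j$; $\boldsymbol{\Sigma}_{ij}$ are the corresponding blocks of $\boldsymbol{\Sigma}$ ($\boldsymbol{\Sigma}_{11}$ is $q\times q$). Define $\mathcal{C}_{11}^{n,\boldsymbol{\Sigma}}=C_{11}^n+\frac{\eta}{n}\boldsymbol{\Sigma}_{11}$, $\mathcal{C}_{21}^{n,\boldsymbol{\Sigma}}=C_{21}^n+\frac{\eta}{n}\boldsymbol{\Sigma}_{21}$, $W_n(1)=n^{-1/2}\mathbf{X}_1'\boldsymbol{\epsilon}$, $W_n(2)=n^{-1/2}\mathbf{X}_2'\boldsymbol{\epsilon}$. $\mathrm{sign}(x)=1,-1,0$ for $x>0,x<0,x=0$, applied componentwise. *)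

From HB Require Import structures.
From mathcomp Require Import all_boot all_order all_algebra.
From mathcomp Require Import all_classical all_reals all_analysis.
Set Implicit Arguments. Unset Strict Implicit. Unset Printing Implicit Defensive.
Import Order.TTheory GRing.Theory Num.Theory.
Local Open Scope classical_set_scope.
Local Open Scope ring_scope.

Section Defs.
Context {R : realType}.

Definition sqnorm2 {m : nat} (v : 'cV[R]_m) : R := \sum_(i < m) v i 0 ^+ 2.
Definition norm1 {m : nat} (v : 'cV[R]_m) : R := \sum_(i < m) `|v i 0|.

Definition sgnv {m : nat} (v : 'cV[R]_m) : 'cV[R]_m := map_mx Num.sg v.

Definition sym_posdef {m : nat} (S : 'M[R]_m) : Prop :=
  S^T = S /\ forall v : 'cV[R]_m, v != 0 -> 0 < (v^T *m S *m v) 0 0.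

(* Sm is Sigma^{-1/2} := U D^{-1/2} U' for a spectral decomposition
   Sigma = U D U' (U orthogonal, D diagonal with positive entries). *)
Definition is_Sigma_mhalf {m : nat} (S Sm : 'M[R]_m) : Prop :=
  exists (U : 'M[R]_m) (d : 'rV[R]_m),
    [/\ U^T *m U = 1%:M, (forall i, 0 < d 0 i),
        S = U *m diag_mx d *m U^T &
        Sm = U *m diag_mx (map_mx (fun x => (Num.sqrt x)^-1) d) *m U^T].

(* objective of the transformed problem, in btilde *)
Definition gEN_obj {n p : nat} (X : 'M[R]_(n, p)) (y : 'cV[R]_n) (Sm : 'M[R]_p)
  (lambda eta : R) (bt : 'cV[R]_p) : R :=
  sqnorm2 (y - (X *m Sm) *m bt) + lambda * norm1 (Sm *m bt) + eta * sqnorm2 bt.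

Definition gEN_tilde {n p : nat} (X : 'M[R]_(n, p)) (y : 'cV[R]_n) (Sm : 'M[R]_p)
  (lambda eta : R) : 'cV[R]_p :=
  xget 0 [set bt | forall b, gEN_obj X y Sm lambda eta bt <= gEN_obj X y Sm lambda eta b].

Definition gEN {n p : nat} (X : 'M[R]_(n, p)) (y : 'cV[R]_n) (Sm : 'M[R]_p)
  (lambda eta : R) : 'cV[R]_p := Sm *m gEN_tilde X y Sm lambda eta.


Section Events.
Variables (n q r : nat) (X : 'M[R]_(n, q + r)) (eps : 'cV[R]_n)
  (Sigma : 'M[R]_(q + r)) (b1 : 'cV[R]_q) (lambda eta : R).

Definition X1 : 'M[R]_(n, q) := lsubmx X.
Definition X2 : 'M[R]_(n, r) := rsubmx X.
Definition Sig11 : 'M[R]_q := ulsubmx Sigma.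
Definition Sig21 : 'M[R]_(r, q) := dlsubmx Sigma.
Definition nR : R := n%:R.
Definition Cn11 : 'M[R]_q := nR^-1 *: (X1^T *m X1).
Definition Cn21 : 'M[R]_(r, q) := nR^-1 *: (X2^T *m X1).
Definition CS11 : 'M[R]_q := Cn11 + (eta / nR) *: Sig11.
Definition CS21 : 'M[R]_(r, q) := Cn21 + (eta / nR) *: Sig21.
Definition Wn1 : 'cV[R]_q := (Num.sqrt nR)^-1 *: (X1^T *m eps).
Definition Wn2 : 'cV[R]_r := (Num.sqrt nR)^-1 *: (X2^T *m eps).

Definition eventA : Prop :=
  forall i : 'I_q,
    `|(invmx CS11 *m Wn1) i 0| <
    Num.sqrt nR * (`|b1 i 0|
                   - lambda / (2 * nR) * `|(invmx CS11 *m sgnv b1) i 0|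
                   - eta / nR * `|(invmx CS11 *m Sig11 *m b1) i 0|).

Definition eventB : Prop :=
  forall j : 'I_r,
    `|(CS21 *m invmx CS11 *m Wn1 - Wn2) j 0| <=
    lambda / (2 * Num.sqrt nR)
    - lambda / (2 * Num.sqrt nR) *
      `|(CS21 *m invmx CS11 *m (sgnv b1 + (2 * eta / lambda) *: (Sig11 *m b1))
         - (2 * eta / lambda) *: (Sig21 *m b1)) j 0|.
End Events.

Section Prob.
Context {d : measure_display} {Omega : measurableType d} (P : probability Omega R).

(* V (given by its coordinates) is a random vector with law N(0, S):
   measurable coordinates, and every nontrivial linear combination u'V is
   a centered real normal with variance u' S u. *)
Definition gaussian_vec {m : nat} (V : 'I_m -> Omega -> R) (S : 'M[R]_m) : Prop :=
  (forall j, measurable_fun setT (V j)) /\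
  forall u : 'cV[R]_m, u != 0 ->
    forall B : set R, measurable B ->
      P ((fun w => \sum_(j < m) u j 0 * V j w) @^-1` B) =
      normal_prob 0 (Num.sqrt ((u^T *m S *m u) 0 0)) B.

Definition vec_event {J : finType} (V : J -> Omega -> R) (B : J -> set R) : set Omega :=
  [set w | forall j, B j (V j w)].

Definition mutually_indep {I J : finType} (V : I -> J -> Omega -> R) : Prop :=
  forall B : I -> J -> set R, (forall i j, measurable (B i j)) ->
    P [set w | forall i, vec_event (V i) (B i) w] =
    (\prod_(i : I) P (vec_event (V i) (B i)))%E.

Definition indep2 {J1 J2 : finType} (V1 : J1 -> Omega -> R) (V2 : J2 -> Omega -> R) : Prop :=
  forall (B1 : J1 -> set R) (B2 : J2 -> set R),
    (forall j, measurable (B1 j)) -> (forall j, measurable (B2 j)) ->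
    P (vec_event V1 B1 `&` vec_event V2 B2) =
    (P (vec_event V1 B1) * P (vec_event V2 B2))%E.

End Prob.
End Defs.

From HB Require Import structures.
From mathcomp Require Import all_boot all_order all_algebra.
From mathcomp Require Import all_classical all_reals all_analysis.
From mathcomp Require Import measurable_realfun.
From mathcomp Require Import ring lra.
Import Order.TTheory GRing.Theory Num.Theory.
Local Open Scope classical_set_scope.
Local Open Scope ring_scope.
Set Implicit Arguments. Unset Strict Implicit.

(* The
   argument is deterministic; the Gaussian assumptions only serve to make the
   events measurable.
   1. gEN is, after the substitution b = Sigma^{-1/2} bt, the minimizer of
      enet_obj b = |y - X b|^2 + lam |b|_1 + eta b' Sigma b.  This strictly
      convex problem is solved exactly by the points satisfying its KKT
      conditions (coordinatewise subgradient calculus).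
   2. The oracle c1 solves the KKT equations on the support {1..q} with the
      signs of b1.  sgn(gEN) = sgn(beta_star) holds iff c1 has the signs of
      b1 and the KKT inequalities hold off the support at (c1, 0)
      (oracle_cond).
   3. In the model, c1 - b1 and the off-support gradient are explicit in the
      quantities of the events A_n and B_n; hence A_n /\ B_n implies
      oracle_cond.
   4. All these events are measurable, so monotonicity of P concludes. *)

Section Dot.
Variable R : realFieldType.

Definition dotv {m : nat} (a b : 'cV[R]_m) : R := (a^T *m b) 0 0.

Lemma dotvE m (a b : 'cV[R]_m) : dotv a b = \sum_i a i 0 * b i 0.
Proof. by rewrite /dotv !mxE; apply: eq_bigr => i _; rewrite mxE. Qed.

Lemma dotvC m (a b : 'cV[R]_m) : dotv a b = dotv b a.
Proof. by rewrite !dotvE; apply: eq_bigr => i _; rewrite mulrC. Qed.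

Lemma dotvDl m (a b c : 'cV[R]_m) : dotv (a + b) c = dotv a c + dotv b c.
Proof. by rewrite !dotvE -big_split; apply: eq_bigr => i _; rewrite mxE mulrDl. Qed.

Lemma dotvDr m (a b c : 'cV[R]_m) : dotv c (a + b) = dotv c a + dotv c b.
Proof. by rewrite dotvC dotvDl !(dotvC c). Qed.

Lemma dotvNl m (a c : 'cV[R]_m) : dotv (- a) c = - dotv a c.
Proof. by rewrite !dotvE -sumrN; apply: eq_bigr => i _; rewrite mxE mulNr. Qed.

Lemma dotvNr m (a c : 'cV[R]_m) : dotv c (- a) = - dotv c a.
Proof. by rewrite dotvC dotvNl dotvC. Qed.

Lemma dotvZl m (t : R) (a c : 'cV[R]_m) : dotv (t *: a) c = t * dotv a c.
Proof. by rewrite !dotvE mulr_sumr; apply: eq_bigr => i _; rewrite mxE mulrA. Qed.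

Lemma dotvZr m (t : R) (a c : 'cV[R]_m) : dotv c (t *: a) = t * dotv c a.
Proof. by rewrite dotvC dotvZl dotvC. Qed.

Lemma dotv0l m (c : 'cV[R]_m) : dotv 0 c = 0.
Proof. by rewrite /dotv trmx0 mul0mx mxE. Qed.

Lemma dotv_mulmx m k (A : 'M[R]_(k, m)) (a : 'cV[R]_m) (b : 'cV[R]_k) :
  dotv (A *m a) b = dotv a (A^T *m b).
Proof. by rewrite /dotv trmx_mul mulmxA. Qed.

Lemma dotv_col m1 m2 (a c : 'cV[R]_m1) (b d : 'cV[R]_m2) :
  dotv (col_mx a b) (col_mx c d) = dotv a c + dotv b d.
Proof. by rewrite /dotv tr_col_mx mul_row_col mxE. Qed.

Lemma dotv_ge0 m (a : 'cV[R]_m) : 0 <= dotv a a.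
Proof. by rewrite dotvE sumr_ge0 // => i _; rewrite -expr2 sqr_ge0. Qed.
End Dot.

(* One-dimensional subgradient calculus: the optimality conditions of
   t |-> 2 t g + t^2 Q + lam (|c + t| - |c|) at t = 0, i.e. of a coordinate
   move for a quadratic function plus an l1 penalty. *)
Section Subgradient.
Variable R : realFieldType.
Implicit Types a c g Q lam t : R.

Lemma slope_ge0 a Q (delta : R) : 0 < delta ->
  (forall t, 0 < t -> t < delta -> 0 <= t * a + t ^+ 2 * Q) -> 0 <= a.
Proof.
move=> delta_gt0 H; rewrite leNgt; apply/negP => a_lt0.
have Q1_gt0 : 0 < `|Q| + 1 by rewrite ltr_pwDr.
pose t := Num.min (delta / 2) (- a / (`|Q| + 1)).
have t_gt0 : 0 < t by rewrite lt_min divr_gt0 //= ?divr_gt0 ?oppr_gt0.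
have t_lt : t < delta by rewrite gt_min ltr_pdivrMr //; lra.
have tQ : t * Q <= t * `|Q| by rewrite ler_wpM2l ?ler_norm // ltW.
have tQa : t * `|Q| < - a.
  have : t * (`|Q| + 1) <= - a by rewrite -ler_pdivlMr // ge_min lexx orbT.
  lra.
have := H t t_gt0 t_lt; rewrite expr2 -mulrA -mulrDr pmulr_rge0 //; lra.
Qed.

Lemma norm_addr_small c t : c != 0 -> `|t| < `|c| -> `|c + t| = `|c| + Num.sg c * t.
Proof.
move=> c0; rewrite ltr_norml => /andP[h1 h2].
case: (ltgtP c 0) => [cn|cp|ce]; last by rewrite ce eqxx in c0.
- by rewrite (ltr0_sg cn) (ltr0_norm cn) in h1 h2 *; rewrite ltr0_norm; lra.
- by rewrite (gtr0_sg cp) (gtr0_norm cp) in h1 h2 *; rewrite gtr0_norm; lra.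
Qed.

Definition l1_increment c g Q lam t : R :=
  2 * (t * g) + t ^+ 2 * Q + lam * (`|c + t| - `|c|).

Lemma subgrad_nonzero c g Q lam : c != 0 ->
  (forall t, 0 <= l1_increment c g Q lam t) -> 2 * g = - lam * Num.sg c.
Proof.
move=> c0 H; set a := 2 * g + lam * Num.sg c.
have c_gt0 : 0 < `|c| by rewrite normr_gt0.
have incrE t : `|t| < `|c| -> l1_increment c g Q lam t = t * a + t ^+ 2 * Q.
  by move=> tc; rewrite /l1_increment norm_addr_small // /a; ring.
have a_ge0 : 0 <= a.
  apply: (@slope_ge0 _ Q _ c_gt0) => t t0 tc.
  by rewrite -incrE ?(gtr0_norm t0).
have Na_ge0 : 0 <= - a.
  apply: (@slope_ge0 _ Q _ c_gt0) => t t0 tc.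
  by have := H (- t); rewrite incrE ?normrN ?(gtr0_norm t0) // sqrrN; lra.
have : a = 0 by lra.
rewrite /a; lra.
Qed.

Lemma subgrad_zero g Q lam :
  (forall t, 0 <= l1_increment 0 g Q lam t) -> `|2 * g| <= lam.
Proof.
move=> H; rewrite ler_norml.
have incrP t : 0 < t -> l1_increment 0 g Q lam t = t * (2 * g + lam) + t ^+ 2 * Q.
  by move=> t0; rewrite /l1_increment add0r normr0 subr0 gtr0_norm //; ring.
have incrN t : 0 < t -> l1_increment 0 g Q lam (- t) = t * (lam - 2 * g) + t ^+ 2 * Q.
  by move=> t0; rewrite /l1_increment add0r normr0 subr0 normrN gtr0_norm //; ring.
have h1 : 0 <= 2 * g + lam by apply: (@slope_ge0 _ Q _ ltr01) => t t0 _; rewrite -incrP.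
have h2 : 0 <= lam - 2 * g by apply: (@slope_ge0 _ Q _ ltr01) => t t0 _; rewrite -incrN.
by apply/andP; split; lra.
Qed.

Lemma subgrad_increment_ge0 c g t lam :
  (c != 0 -> 2 * g = - lam * Num.sg c) -> (c = 0 -> `|2 * g| <= lam) ->
  0 <= lam -> 0 <= 2 * (t * g) + lam * (`|c + t| - `|c|).
Proof.
move=> h1 h2 lam_ge0; have [c0|c0] := eqVneq c 0.
  move: (h2 c0); rewrite c0 add0r normr0 subr0 => h.
  have : - (t * (2 * g)) <= `|t| * `|2 * g| by rewrite -normrM -normrN ler_norm.
  have : 0 <= `|t| by [].
  nra.
have sg_le : Num.sg c * (c + t) <= `|c + t|.
  by apply: le_trans (ler_norm _) _; rewrite normrM normr_sg c0 mul1r.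
have -> : 2 * (t * g) = t * (2 * g) by ring.
rewrite (h1 c0) [`|c|]normrEsg; nra.
Qed.
End Subgradient.

Section ElasticNet.
Variables (R : realType) (n p : nat) (X : 'M[R]_(n, p)) (y : 'cV[R]_n)
  (S : 'M[R]_p) (lam eta : R).
Hypotheses (hS : sym_posdef S) (hlam : 0 < lam) (heta : 0 < eta).

Definition enet_obj (b : 'cV[R]_p) : R :=
  sqnorm2 (y - X *m b) + lam * norm1 b + eta * (b^T *m S *m b) 0 0.

(* Half the gradient of the smooth part of the objective. *)
Definition enet_grad (b : 'cV[R]_p) : 'cV[R]_p :=
  X^T *m (X *m b - y) + eta *: (S *m b).

Definition enet_curv (v : 'cV[R]_p) : R := dotv (X *m v) (X *m v) + eta * dotv v (S *m v).

Definition enet_KKT (b : 'cV[R]_p) : Prop := forall i,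
  (b i 0 != 0 -> 2 * enet_grad b i 0 = - lam * Num.sg (b i 0)) /\
  (b i 0 = 0 -> `|2 * enet_grad b i 0| <= lam).

Lemma sqnorm2E m (v : 'cV[R]_m) : sqnorm2 v = dotv v v.
Proof. by rewrite dotvE; apply: eq_bigr => i _; rewrite expr2. Qed.

Lemma quad_formE (b : 'cV[R]_p) : (b^T *m S *m b) 0 0 = dotv b (S *m b).
Proof. by rewrite /dotv mulmxA. Qed.

Lemma enet_obj_expand b v : enet_obj (b + v) =
  enet_obj b + 2 * dotv v (enet_grad b) + enet_curv v + lam * (norm1 (b + v) - norm1 b).
Proof.
rewrite /enet_obj /enet_curv /enet_grad !sqnorm2E !quad_formE.
set e := y - X *m b.
have -> : y - X *m (b + v) = e - X *m v by rewrite /e mulmxDr opprD addrA.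
have -> : X *m b - y = - e by rewrite /e opprB.
rewrite mulmxDr !(dotvDl, dotvDr, dotvNl, dotvNr, dotvZr) -dotv_mulmx dotvNr.
rewrite /e dotvDr dotvNr (dotvC y (X *m v)) (dotvC (X *m b) (X *m v)).
rewrite (dotvC b (S *m v)) (dotv_mulmx S v b) hS.1.
ring.
Qed.

Lemma enet_curv_gt0 v : v != 0 -> 0 < enet_curv v.
Proof.
move=> v0; apply: ltr_pwDr; last exact: dotv_ge0.
by apply: mulr_gt0 => //; rewrite -quad_formE; exact: hS.2.
Qed.

Lemma enet_curv_ge0 v : 0 <= enet_curv v.
Proof.
have [->|v0] := eqVneq v 0; last exact/ltW/enet_curv_gt0.
by rewrite /enet_curv !mulmx0 !dotv0l mulr0 addr0.
Qed.

Lemma KKT_gap c b : enet_KKT c -> enet_obj c + enet_curv (b - c) <= enet_obj b.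
Proof.
move=> hK; have := enet_obj_expand c (b - c); rewrite (addrC c) subrK => ->.
suff : 0 <= 2 * dotv (b - c) (enet_grad c) + lam * (norm1 b - norm1 c) by lra.
rewrite dotvE /norm1 -sumrB mulr_sumr mulr_sumr -big_split /=.
apply: sumr_ge0 => i _; have [h1 h2] := hK i.
have -> : `|b i 0| = `|c i 0 + (b - c) i 0| by rewrite !mxE addrCA subrr addr0.
exact: subgrad_increment_ge0 h1 h2 (ltW hlam).
Qed.

Lemma KKT_unique c b : enet_KKT c -> enet_obj b <= enet_obj c -> b = c.
Proof.
move=> hK hb; apply/eqP; rewrite -subr_eq0; apply/negPn/negP => bc.
have := KKT_gap b hK; have := enet_curv_gt0 bc; lra.
Qed.

Definition unit_vec (i : 'I_p) : 'cV[R]_p := delta_mx i 0.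

Lemma enet_obj_coord c i t : enet_obj (c + t *: unit_vec i) - enet_obj c =
  l1_increment (c i 0) (enet_grad c i 0) (enet_curv (unit_vec i)) lam t.
Proof.
have dot_unit (w : 'cV[R]_p) : dotv (unit_vec i) w = w i 0.
  rewrite dotvE (bigD1 i) //= big1 => [|k hk]; first by rewrite !mxE !eqxx mul1r addr0.
  by rewrite !mxE (negbTE hk) mul0r.
have norm1_unit : norm1 (c + t *: unit_vec i) - norm1 c = `|c i 0 + t| - `|c i 0|.
  rewrite /norm1 (bigD1 i) //= [X in _ - X](bigD1 i) //= !mxE !eqxx mulr1.
  under eq_bigr => k hk do rewrite !mxE (negbTE hk) mulr0 addr0.
  ring.
have curv_scale : enet_curv (t *: unit_vec i) = t ^+ 2 * enet_curv (unit_vec i).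
  by rewrite /enet_curv -!scalemxAr !(dotvZl, dotvZr); ring.
rewrite enet_obj_expand dotvZl dot_unit curv_scale norm1_unit /l1_increment; ring.
Qed.

Lemma minimizer_KKT c : (forall b, enet_obj c <= enet_obj b) -> enet_KKT c.
Proof.
move=> hmin i; have incr_ge0 t : 0 <= l1_increment (c i 0) (enet_grad c i 0)
    (enet_curv (unit_vec i)) lam t.
  by rewrite -enet_obj_coord subr_ge0.
split => [c0|c0]; first exact: subgrad_nonzero c0 incr_ge0.
by apply: (subgrad_zero (Q := enet_curv (unit_vec i))) => t; move: (incr_ge0 t); rewrite c0.
Qed.
End ElasticNet.

(* The substitution b = Sigma^{-1/2} bt turns the gEN objective into
   enet_obj with S = Sigma, since (Sigma^{-1/2})' Sigma Sigma^{-1/2} = I. *)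
Section Reparametrization.
Variables (R : realType) (p : nat) (Sigma Sm : 'M[R]_p).
Hypothesis hSm : is_Sigma_mhalf Sigma Sm.

Lemma mhalf_congruence : Sm^T *m Sigma *m Sm = 1%:M.
Proof.
case: hSm => U [d [hU hd -> ->]].
set Di := diag_mx _.
have hU' : U *m U^T = 1%:M by apply: mulmx1C.
have DdD : Di *m diag_mx d *m Di = 1%:M.
  rewrite /Di !mulmx_diag -diag_const_mx; congr diag_mx; apply/matrixP => i j.
  have d_ge0 : 0 <= d 0 j by apply: ltW.
  have s0 : Num.sqrt (d 0 j) != 0 by rewrite sqrtr_eq0 -ltNge.
  by rewrite !mxE -{2}(sqr_sqrtr d_ge0) expr2; field.
rewrite !trmx_mul trmxK tr_diag_mx -/Di -!mulmxA.
rewrite (mulmxA U^T U) hU mul1mx (mulmxA U^T U) hU mul1mx.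
by rewrite (mulmxA Di) (mulmxA (Di *m diag_mx d)) DdD mul1mx hU'.
Qed.

Lemma mhalf_unit : Sm \in unitmx.
Proof. by have [] := mulmx1_unit mhalf_congruence. Qed.

Lemma gEN_obj_reparam n (X : 'M[R]_(n, p)) y lam eta bt :
  gEN_obj X y Sm lam eta bt = enet_obj X y Sigma lam eta (Sm *m bt).
Proof.
rewrite /gEN_obj /enet_obj -mulmxA; congr (_ + _ * _).
rewrite trmx_mul !mulmxA -(mulmxA _ Sm^T) -(mulmxA _ (Sm^T *m Sigma)).
by rewrite mhalf_congruence mulmx1 sqnorm2E.
Qed.

Section Estimator.
Variables (n : nat) (X : 'M[R]_(n, p)) (y : 'cV[R]_n) (lam eta : R).
Hypotheses (hSigma : sym_posdef Sigma) (hlam : 0 < lam) (heta : 0 < eta).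

Lemma gEN_of_KKT c : enet_KKT X y Sigma lam eta c -> gEN X y Sm lam eta = c.
Proof.
move=> hK; rewrite /gEN /gEN_tilde; set M := [set bt | _].
have hM : M (invmx Sm *m c).
  move=> b; rewrite !gEN_obj_reparam mulKVmx ?mhalf_unit //.
  have := KKT_gap hSigma hlam (Sm *m b) hK.
  have := enet_curv_ge0 X hSigma heta (Sm *m b - c); lra.
have := xgetPex 0 (ex_intro _ _ hM) (invmx Sm *m c).
rewrite !gEN_obj_reparam mulKVmx ?mhalf_unit //.
by move=> h; exact: (KKT_unique hSigma hlam heta hK h).
Qed.

(* The choice in gEN_tilde defaults to 0; a nonzero estimate therefore
   comes from an actual minimizer. *)
Lemma gEN_minimizes : gEN X y Sm lam eta != 0 ->
  forall b, enet_obj X y Sigma lam eta (gEN X y Sm lam eta) <= enet_obj X y Sigma lam eta b.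
Proof.
rewrite /gEN /gEN_tilde; set M := [set bt | _].
case: (xgetP 0 M) => [bt _ hbt _ b|_]; last by rewrite mulmx0 eqxx.
by have := hbt (invmx Sm *m b); rewrite !gEN_obj_reparam mulKVmx ?mhalf_unit.
Qed.
End Estimator.
End Reparametrization.

Lemma posdef_unitmx (R : realFieldType) m (A : 'M[R]_m) :
  (forall u : 'cV[R]_m, u != 0 -> 0 < dotv u (A *m u)) -> A \in unitmx.
Proof.
move=> hA; rewrite -row_free_unit; apply: inj_row_free => v vA0.
apply/eqP/negPn/negP => v0; have := hA v^T; rewrite trmx_eq0 => /(_ v0).
by rewrite dotvC dotv_mulmx -trmx_mul vA0 trmx0 /dotv mulmx0 mxE ltxx.
Qed.

Lemma ulsub_posdef (R : realType) q r (Sigma : 'M[R]_(q + r)) (u : 'cV[R]_q) :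
  sym_posdef Sigma -> u != 0 -> 0 < dotv u (ulsubmx Sigma *m u).
Proof.
move=> hS u0; have w0 : col_mx u (0 : 'cV[R]_r) != 0 by rewrite col_mx_eq0 negb_and u0.
have := hS.2 _ w0; rewrite quad_formE -{1}[Sigma]submxK mul_block_col !mulmx0 !addr0.
by rewrite dotv_col dotv0l addr0.
Qed.

Lemma forall_split q r (P : 'I_(q + r) -> Prop) :
  (forall k, P (lshift r k)) -> (forall k, P (rshift q k)) -> forall i, P i.
Proof.
move=> h1 h2 i; case: (splitP i) => k hk.
- by have -> : i = lshift r k by apply/val_inj.
- by have -> : i = rshift q k by apply/val_inj.
Qed.

Lemma sg_eq_mul_gt0 (R : realDomainType) (a b : R) : b != 0 ->
  (Num.sg a == Num.sg b) = (0 < a * b).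
Proof.
case: (ltgtP b 0) => hb // _.
- by rewrite (ltr0_sg hb) nmulr_lgt0 // sgr_cp0.
- by rewrite (gtr0_sg hb) pmulr_lgt0 // sgr_cp0.
Qed.

(* With p = q + r and the true support the first q
   coordinates, solve the KKT equations on the support assuming the signs of
   b1 are recovered: c1 = (X1'X1 + eta Sigma11)^{-1} (X1'y - lam/2 sgn b1).
   The sign of gEN is that of (b1, 0) exactly when c1 has the signs of b1 and
   the off-support KKT inequalities hold at (c1, 0) (oracle_cond). *)
Section Oracle.
Variables (R : realType) (n q r : nat) (X : 'M[R]_(n, q + r)) (y : 'cV[R]_n)
  (Sigma Sm : 'M[R]_(q + r)) (b1 : 'cV[R]_q) (lam eta : R).
Hypotheses (hSm : is_Sigma_mhalf Sigma Sm) (hSigma : sym_posdef Sigma)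
  (hlam : 0 < lam) (heta : 0 < eta) (hb1 : forall i, b1 i 0 != 0).

Definition oracle_gram : 'M[R]_q := (lsubmx X)^T *m lsubmx X + eta *: ulsubmx Sigma.

Definition oracle : 'cV[R]_q :=
  invmx oracle_gram *m ((lsubmx X)^T *m y - (lam / 2) *: sgnv b1).

Definition grad_top (v : 'cV[R]_q) : 'cV[R]_q :=
  (lsubmx X)^T *m (lsubmx X *m v - y) + eta *: (ulsubmx Sigma *m v).
Definition grad_bot (v : 'cV[R]_q) : 'cV[R]_r :=
  (rsubmx X)^T *m (lsubmx X *m v - y) + eta *: (dlsubmx Sigma *m v).

Definition oracle_cond : Prop :=
  (forall i, 0 < oracle i 0 * b1 i 0) /\ (forall j, `|2 * grad_bot oracle j 0| <= lam).

Lemma mulmx_col0 (v : 'cV[R]_q) : X *m col_mx v 0 = lsubmx X *m v.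
Proof. by rewrite -{1}[X]hsubmxK mul_row_col mulmx0 addr0. Qed.

Lemma enet_grad_col0 v :
  enet_grad X y Sigma eta (col_mx v 0) = col_mx (grad_top v) (grad_bot v).
Proof.
rewrite /enet_grad mulmx_col0 -[Sigma]submxK mul_block_col !mulmx0 !addr0.
by rewrite -{1}[X]hsubmxK tr_row_mx mul_col_mx scale_col_mx add_col_mx.
Qed.

(* X1'X1 + eta Sigma11 is positive definite, hence the oracle is well defined. *)
Lemma oracle_gram_unit : oracle_gram \in unitmx.
Proof.
apply: posdef_unitmx => u u0; rewrite /oracle_gram mulmxDl dotvDr -mulmxA.
rewrite -dotv_mulmx -scalemxAl dotvZr.
by apply: ltr_wpDl; [exact: dotv_ge0 | apply: mulr_gt0 => //; exact: ulsub_posdef].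
Qed.

Lemma grad_topE v : grad_top v = oracle_gram *m v - (lsubmx X)^T *m y.
Proof. by rewrite /grad_top /oracle_gram mulmxBr mulmxDl mulmxA -scalemxAl addrAC. Qed.

Lemma grad_top_oracle : grad_top oracle = - (lam / 2) *: sgnv b1.
Proof.
rewrite grad_topE /oracle mulKVmx ?oracle_gram_unit //.
by rewrite addrAC subrr add0r scaleNr.
Qed.

Lemma grad_top_eq_oracle v : grad_top v = - (lam / 2) *: sgnv b1 -> v = oracle.
Proof.
rewrite grad_topE => /eqP; rewrite subr_eq => /eqP hM.
by rewrite /oracle -[v](mulKmx oracle_gram_unit) hM addrC scaleNr.
Qed.

Lemma oracle_KKT : oracle_cond -> enet_KKT X y Sigma lam eta (col_mx oracle 0).
Proof.
case=> hsign hbot; rewrite /enet_KKT enet_grad_col0; apply: forall_split => k.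
- rewrite !col_mxEu grad_top_oracle; split => [_|hk].
    have /eqP -> : Num.sg (oracle k 0) == Num.sg (b1 k 0) by rewrite sg_eq_mul_gt0.
    by rewrite !mxE; field.
  by have := hsign k; rewrite hk mul0r ltxx.
- by rewrite !col_mxEd mxE eqxx; split.
Qed.

Lemma oracle_sign : oracle_cond -> sgnv (gEN X y Sm lam eta) = sgnv (col_mx b1 0).
Proof.
move=> hcond; have [hsign _] := hcond.
rewrite (gEN_of_KKT hSm hSigma hlam heta (oracle_KKT hcond)).
apply/matrixP => i j; rewrite (ord1 j) [LHS]mxE [RHS]mxE; move: i; apply: forall_split => k.
- by rewrite !col_mxEu; apply/eqP; rewrite sg_eq_mul_gt0.
- by rewrite !col_mxEd mxE.
Qed.

Lemma KKT_sign_oracle c : enet_KKT X y Sigma lam eta c ->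
  sgnv c = sgnv (col_mx b1 0) -> c = col_mx oracle 0 /\ oracle_cond.
Proof.
move=> hK /matrixP hsgn.
have sg_c i : Num.sg (c i 0) = Num.sg (col_mx b1 0 i 0) by have := hsgn i 0; rewrite !mxE.
have c_bot : dsubmx c = 0.
  apply/matrixP => k j; rewrite (ord1 j) !mxE; apply/eqP.
  by rewrite -sgr_eq0 sg_c col_mxEd mxE sgr0.
have c1_sg k : Num.sg (usubmx c k 0) = Num.sg (b1 k 0) by rewrite mxE sg_c col_mxEu.
have c1_nz k : usubmx c k 0 != 0 by rewrite -sgr_eq0 c1_sg sgr_eq0.
set c1 := usubmx c in c1_sg c1_nz.
have hc : c = col_mx c1 0 by rewrite -c_bot vsubmxK.
rewrite hc in hK; rewrite hc; clearbody c1.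
have c1_oracle : c1 = oracle.
  apply: grad_top_eq_oracle; apply/matrixP => k j; rewrite (ord1 j).
  have [h1 _] := hK (lshift r k); move: h1; rewrite enet_grad_col0 !col_mxEu c1_sg.
  move/(_ (c1_nz k)) => h; rewrite [RHS]mxE [sgnv _ _ _]mxE.
  by apply: (@mulfI _ 2); [rewrite pnatr_eq0 | rewrite h; field].
split; first by rewrite c1_oracle.
split => [k|j]; first by rewrite -sg_eq_mul_gt0 // -c1_oracle c1_sg.
have [_ h2] := hK (rshift q j); move: h2; rewrite enet_grad_col0 !col_mxEd mxE c1_oracle.
exact.
Qed.

Lemma sign_oracle : (0 < q)%N ->
  sgnv (gEN X y Sm lam eta) = sgnv (col_mx b1 0) -> oracle_cond.
Proof.
move=> hq hsgn; set c := gEN X y Sm lam eta in hsgn.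
have c0 : c != 0.
  apply/eqP => c0; move/matrixP: hsgn => /(_ (lshift r (Ordinal hq)) 0).
  rewrite c0 [sgnv 0 _ _]mxE [sgnv _ _ _]mxE col_mxEu mxE sgr0 => /esym/eqP.
  rewrite sgr_eq0.
  exact/negP/hb1.
have hK := minimizer_KKT hSigma (gEN_minimizes hSm c0).
by have [] := KKT_sign_oracle hK hsgn.
Qed.
End Oracle.

Section EventBounds.
Variable R : realFieldType.

Lemma mul_gt0_of_close (b c : R) : `|c - b| < `|b| -> 0 < c * b.
Proof.
case: (ltgtP b 0) => hb; rewrite ?(ltr0_norm hb) ?(gtr0_norm hb) ?hb ?normr0 ?ltxx //;
  rewrite ltr_norml => /andP[h1 h2]; nra.
Qed.

Lemma norm_comb3_le (a s t ka ks kt : R) : 0 <= ka -> 0 <= ks -> 0 <= kt ->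
  `|ka * a - ks * s - kt * t| <= ka * `|a| + ks * `|s| + kt * `|t|.
Proof.
move=> ha hs ht; apply: le_trans (ler_normB _ _) _; rewrite lerD //.
  by apply: le_trans (ler_normB _ _) _; rewrite !normrM !(ger0_norm ha, ger0_norm hs).
by rewrite normrM ger0_norm.
Qed.

Lemma sign_agree_of_eventA (c b a s t rN ks kt : R) : 0 < rN -> 0 <= ks -> 0 <= kt ->
  c - b = rN^-1 * a - ks * s - kt * t ->
  `|a| < rN * (`|b| - ks * `|s| - kt * `|t|) -> 0 < c * b.
Proof.
move=> rN_gt0 ks_ge0 kt_ge0 dev hA; apply: mul_gt0_of_close; rewrite dev.
apply: le_lt_trans (norm_comb3_le a s t _ ks_ge0 kt_ge0) _; first by rewrite invr_ge0 ltW.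
by move: hA; rewrite -ltr_pdivrMl //; lra.
Qed.

Lemma offsupport_of_eventB (t1 t2 rN lam : R) : 0 < rN -> 0 < lam ->
  `|t1| <= lam / (2 * rN) - lam / (2 * rN) * `|t2| ->
  `|2 * (rN * t1 - lam / 2 * t2)| <= lam.
Proof.
move=> rN_gt0 lam_gt0 hB.
have h2 : 2 * rN * `|t1| <= lam - lam * `|t2|.
  have -> : lam - lam * `|t2| = 2 * rN * (lam / (2 * rN) - lam / (2 * rN) * `|t2|).
    by field; rewrite gt_eqF.
  by rewrite ler_wpM2l // mulr_ge0 // ltW.
have -> : 2 * (rN * t1 - lam / 2 * t2) = 2 * rN * t1 - lam * t2 by field.
apply: le_trans (ler_normB _ _) _.
have rN2_gt0 : 0 < 2 * rN by rewrite mulr_gt0.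
rewrite [`|2 * rN * _|]normrM [`|lam * _|]normrM.
by rewrite (gtr0_norm lam_gt0) (gtr0_norm rN2_gt0); lra.
Qed.
End EventBounds.

(* Entrywise evaluation of matrix expressions, without unfolding products. *)
Lemma mxE_add (R : realType) m k (A B : 'M[R]_(m, k)) i j : (A + B) i j = A i j + B i j.
Proof. by rewrite mxE. Qed.
Lemma mxE_opp (R : realType) m k (A : 'M[R]_(m, k)) i j : (- A) i j = - A i j.
Proof. by rewrite mxE. Qed.
Lemma mxE_scale (R : realType) m k (a : R) (A : 'M[R]_(m, k)) i j : (a *: A) i j = a * A i j.
Proof. by rewrite mxE. Qed.
Lemma mxE_sub (R : realType) m k (A B : 'M[R]_(m, k)) i j : (A - B) i j = A i j - B i j.
Proof. by rewrite !mxE. Qed.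
Lemma mxE_comb2 (R : realType) m k (a b : R) (A B : 'M[R]_(m, k)) i j :
  (a *: A - b *: B) i j = a * A i j - b * B i j.
Proof. by rewrite !mxE. Qed.
Lemma mxE_comb3 (R : realType) m k (a b c : R) (A B C : 'M[R]_(m, k)) i j :
  (a *: A - b *: B - c *: C) i j = a * A i j - b * B i j - c * C i j.
Proof. by rewrite !mxE. Qed.

(* In the model y = X (b1, 0) + eps, the oracle and the off-support gradient
   are explicit affine functions of the noise; rescaled by n they are exactly
   the quantities appearing in the events A_n and B_n. *)
Section OracleInModel.
Variables (R : realType) (n q r : nat) (X : 'M[R]_(n, q + r)) (eps : 'cV[R]_n)
  (Sigma : 'M[R]_(q + r)) (b1 : 'cV[R]_q) (lam eta : R).
Hypotheses (hSigma : sym_posdef Sigma) (hlam : 0 < lam) (heta : 0 < eta) (hn : (0 < n)%N).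

Let y := X *m col_mx b1 0 + eps.
Let N : R := nR n.
Let rN : R := Num.sqrt N.
Let Mi := invmx (oracle_gram X Sigma eta).
Let oc := oracle X y Sigma b1 lam eta.

Lemma nR_gt0 : 0 < N. Proof. by rewrite /N /nR ltr0n. Qed.
Lemma sqrt_nR_gt0 : 0 < rN. Proof. by rewrite /rN sqrtr_gt0 nR_gt0. Qed.
Lemma sqrt_nR_sqr : rN * rN = N. Proof. by rewrite -expr2 /rN sqr_sqrtr // ltW // nR_gt0. Qed.

Lemma invmx_CS11 : invmx (CS11 X Sigma eta) = N *: Mi.
Proof.
have hN : N^-1 \is a GRing.unit by rewrite unitfE invr_eq0 gt_eqF // nR_gt0.
have -> : CS11 X Sigma eta = N^-1 *: oracle_gram X Sigma eta.
  by rewrite /CS11 /Cn11 /oracle_gram /X1 /Sig11 scalerDr scalerA mulrC.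
by rewrite invmxZ ?unitmxZ ?oracle_gram_unit // invrK.
Qed.

Lemma CS21E : CS21 X Sigma eta =
  N^-1 *: ((rsubmx X)^T *m lsubmx X + eta *: dlsubmx Sigma).
Proof. by rewrite /CS21 /Cn21 /X1 /X2 /Sig21 scalerDr scalerA mulrC. Qed.

Lemma oracle_in_model : oc = b1 + (Mi *m ((lsubmx X)^T *m eps)
   - (lam / 2) *: (Mi *m sgnv b1) - eta *: (Mi *m (ulsubmx Sigma *m b1))).
Proof.
rewrite /oc /oracle -/Mi /y mulmx_col0.
have MiX1b1 : Mi *m ((lsubmx X)^T *m (lsubmx X *m b1)) =
    b1 - eta *: (Mi *m (ulsubmx Sigma *m b1)).
  have -> : (lsubmx X)^T *m (lsubmx X *m b1) =
      (oracle_gram X Sigma eta - eta *: ulsubmx Sigma) *m b1.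
    by rewrite mulmxA /oracle_gram addrK.
  by rewrite mulmxBl mulmxBr mulKmx ?oracle_gram_unit // -!scalemxAl -scalemxAr.
rewrite !mulmxDr !mulmxN MiX1b1 -!scalemxAr.
by apply/matrixP => i j; rewrite !(mxE_add, mxE_opp, mxE_scale); ring.
Qed.

Lemma oracle_deviation : oc - b1 =
  rN^-1 *: (invmx (CS11 X Sigma eta) *m Wn1 X eps)
  - lam / (2 * N) *: (invmx (CS11 X Sigma eta) *m sgnv b1)
  - eta / N *: (invmx (CS11 X Sigma eta) *m Sig11 Sigma *m b1).
Proof.
rewrite oracle_in_model invmx_CS11 /Wn1 /X1 /Sig11 -/N -/rN addrAC subrr add0r.
rewrite -!scalemxAl -!scalemxAr !scalerA !mulmxA -sqrt_nR_sqr.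
have rN0 : rN != 0 by rewrite gt_eqF // sqrt_nR_gt0.
by apply/matrixP => i j; rewrite !(mxE_add, mxE_opp, mxE_scale); field.
Qed.

Lemma grad_bot_oracle : grad_bot X y Sigma eta oc =
  rN *: (CS21 X Sigma eta *m invmx (CS11 X Sigma eta) *m Wn1 X eps - Wn2 X eps)
  - lam / 2 *: (CS21 X Sigma eta *m invmx (CS11 X Sigma eta) *m
       (sgnv b1 + (2 * eta / lam) *: (Sig11 Sigma *m b1))
     - (2 * eta / lam) *: (Sig21 Sigma *m b1)).
Proof.
rewrite /grad_bot oracle_in_model /y mulmx_col0 CS21E invmx_CS11.
rewrite /Wn1 /Wn2 /X1 /X2 /Sig11 /Sig21 -/N -/rN.
do 4 rewrite ?(mulmxDr, mulmxDl, mulmxN, mulNmx, scalerDr, scalerN, scalerA)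
  -?scalemxAl -?scalemxAr.
rewrite !mulmxA -sqrt_nR_sqr.
have rN0 : rN != 0 by rewrite gt_eqF // sqrt_nR_gt0.
have lam0 : lam != 0 by rewrite gt_eqF.
apply/matrixP => i j; rewrite !(mxE_add, mxE_opp, mxE_scale); by field; rewrite lam0 rN0.
Qed.

Lemma events_oracle_cond : eventA X eps Sigma b1 lam eta ->
  eventB X eps Sigma b1 lam eta -> oracle_cond X y Sigma b1 lam eta.
Proof.
move=> hA hB; split => [i|j].
- have := congr1 (fun M : 'cV[R]_q => M i 0) oracle_deviation.
  rewrite /= mxE_sub mxE_comb3 => dev.
  apply: (sign_agree_of_eventA sqrt_nR_gt0 _ _ dev (hA i)).
  + by rewrite divr_ge0 ?mulr_ge0 ?ltW ?nR_gt0.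
  + by rewrite divr_ge0 ?ltW ?nR_gt0.
- have := congr1 (fun M : 'cV[R]_r => M j 0) grad_bot_oracle.
  rewrite /= mxE_comb2 => ->.
  exact: offsupport_of_eventB sqrt_nR_gt0 hlam (hB j).
Qed.
End OracleInModel.

(* Both events and the oracle condition are built from the
   entries of X and eps by finitely many sums, products, absolute values,
   matrix inversions (Cramer's rule) and comparisons, hence are measurable;
   this is all the probabilistic input the comparison of probabilities needs. *)
Lemma measurable_inv (R : realType) : measurable_fun setT (@GRing.inv R).
Proof.
have -> : @GRing.inv R = (fun x : R => if x == 0 then 0 else x^-1).
  by apply/funext => x; case: eqP => // ->; rewrite invr0.
apply: measurable_fun_if => //.
- by apply: measurable_fun_eqr => //; exact: measurable_cst.
- have -> : setT `&` ((fun x : R => x == 0) @^-1` [set false]) = [set x : R | x != 0].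
    by apply/seteqP; split => x /=; [case=> _ /negbT|move=> /negbTE h; split].
  apply: open_continuous_measurable_fun; first exact: open_neq.
  by move=> x; rewrite inE /= => x0; apply: inv_continuous.
Qed.

Section MeasurableMatrix.
Context d (T : measurableType d) (R : realType).

Definition measurable_mx m k (F : T -> 'M[R]_(m, k)) : Prop :=
  forall i j, measurable_fun setT (fun w => F w i j).

Lemma measurable_mx_cst m k (A : 'M[R]_(m, k)) : measurable_mx (fun _ => A).
Proof. by move=> i j; exact: measurable_cst. Qed.

Lemma measurable_mx_add m k (F G : T -> 'M[R]_(m, k)) :
  measurable_mx F -> measurable_mx G -> measurable_mx (fun w => F w + G w).
Proof. by move=> hF hG i j; under eq_fun do rewrite mxE; exact: measurable_funD. Qed.

Lemma measurable_mx_sub m k (F G : T -> 'M[R]_(m, k)) :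
  measurable_mx F -> measurable_mx G -> measurable_mx (fun w => F w - G w).
Proof. by move=> hF hG i j; under eq_fun do rewrite !mxE; exact: measurable_funB. Qed.

Lemma measurable_mx_scale m k (a : R) (F : T -> 'M[R]_(m, k)) :
  measurable_mx F -> measurable_mx (fun w => a *: F w).
Proof.
move=> hF i j; under eq_fun do rewrite mxE.
by apply: measurable_funM => //; exact: measurable_cst.
Qed.

Lemma measurable_mx_mul m k l (F : T -> 'M[R]_(m, k)) (G : T -> 'M[R]_(k, l)) :
  measurable_mx F -> measurable_mx G -> measurable_mx (fun w => F w *m G w).
Proof.
move=> hF hG i j; under eq_fun do rewrite mxE.
by apply: measurable_sum => t; exact: measurable_funM.
Qed.

Lemma measurable_mx_tr m k (F : T -> 'M[R]_(m, k)) :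
  measurable_mx F -> measurable_mx (fun w => (F w)^T).
Proof. by move=> hF i j; under eq_fun do rewrite mxE; exact: hF. Qed.

Lemma measurable_mx_lsub m k1 k2 (F : T -> 'M[R]_(m, k1 + k2)) :
  measurable_mx F -> measurable_mx (fun w => lsubmx (F w)).
Proof. by move=> hF i j; under eq_fun do rewrite mxE; exact: hF. Qed.

Lemma measurable_mx_rsub m k1 k2 (F : T -> 'M[R]_(m, k1 + k2)) :
  measurable_mx F -> measurable_mx (fun w => rsubmx (F w)).
Proof. by move=> hF i j; under eq_fun do rewrite mxE; exact: hF. Qed.

Lemma measurable_mx_minor m k (F : T -> 'M[R]_(m.+1, k.+1)) i0 j0 :
  measurable_mx F -> measurable_mx (fun w => row' i0 (col' j0 (F w))).
Proof. by move=> hF i j; under eq_fun do rewrite !mxE; exact: hF. Qed.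

Lemma measurable_det m (F : T -> 'M[R]_m) :
  measurable_mx F -> measurable_fun setT (fun w => \det (F w)).
Proof.
move=> hF; apply: measurable_sum => s; apply: measurable_funM; first exact: measurable_cst.
by apply: measurable_prod => i _; exact: hF.
Qed.

Lemma measurable_mx_inv m (F : T -> 'M[R]_m) :
  measurable_mx F -> measurable_mx (fun w => invmx (F w)).
Proof.
move=> hF i j; rewrite /invmx.
under eq_fun do rewrite unitmxE unitfE (fun_if (fun M : 'M[R]_m => M i j)) mxE.
apply: measurable_fun_ifT; last exact: hF.
- apply/measurable_neg/measurable_fun_eqr; first exact: measurable_det.
  exact: measurable_cst.
apply: measurable_funM; first exact: measurableT_comp (@measurable_inv R) (measurable_det hF).
case: m F hF i j => [|m] F hF i j; first by case: i.
under eq_fun do rewrite mxE /cofactor.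
apply: measurable_funM; first exact: measurable_cst.
exact/measurable_det/measurable_mx_minor.
Qed.

Lemma measurable_boolset (h : T -> bool) : measurable_fun setT h -> measurable [set w | h w].
Proof.
move=> mh; have := mh measurableT [set true] I; rewrite setTI.
by congr measurable; apply/seteqP; split => w /=.
Qed.

Lemma measurable_forall (I : finType) (P : I -> set T) :
  (forall i, measurable (P i)) -> measurable [set w | forall i, P i w].
Proof.
move=> hP; rewrite (_ : [set w | _] = \bigcap_(i in setT) P i).
  by apply: fin_bigcap_measurable => //; exact: finite_finset.
by apply/seteqP; split => w /= h i; [move=> _|]; apply: h.
Qed.

Lemma measurable_lt_set (f g : T -> R) : measurable_fun setT f -> measurable_fun setT g ->
  measurable [set w | f w < g w].
Proof. by move=> mf mg; apply: measurable_boolset; exact: measurable_fun_ltr. Qed.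

Lemma measurable_le_set (f g : T -> R) : measurable_fun setT f -> measurable_fun setT g ->
  measurable [set w | f w <= g w].
Proof. by move=> mf mg; apply: measurable_boolset; exact: measurable_fun_ler. Qed.
End MeasurableMatrix.

Section MeasurableEvents.
Context d (T : measurableType d) (R : realType) (n q r : nat)
  (X : T -> 'M[R]_(n, q + r)) (eps : T -> 'cV[R]_n)
  (Sigma : 'M[R]_(q + r)) (b1 : 'cV[R]_q) (lam eta : R).
Hypotheses (hX : measurable_mx X) (heps : measurable_mx eps).

(* The blocks X1, X2 are measurable; these facts close the side goals of the
   proofs below (through the `//` terminator). *)
Let mX1 : measurable_mx (fun w => lsubmx (X w)). Proof. exact: measurable_mx_lsub. Qed.
Let mX2 : measurable_mx (fun w => rsubmx (X w)). Proof. exact: measurable_mx_rsub. Qed.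

Lemma measurable_invCS11 : measurable_mx (fun w => invmx (CS11 (X w) Sigma eta)).
Proof.
apply/measurable_mx_inv/measurable_mx_add; last exact: measurable_mx_cst.
by apply/measurable_mx_scale/measurable_mx_mul => //; exact: measurable_mx_tr.
Qed.

Lemma measurable_Wn1 : measurable_mx (fun w => Wn1 (X w) (eps w)).
Proof. by apply/measurable_mx_scale/measurable_mx_mul => //; exact: measurable_mx_tr. Qed.

Lemma measurable_eventA : measurable [set w | eventA (X w) (eps w) Sigma b1 lam eta].
Proof.
have mMi := measurable_invCS11.
apply: measurable_forall => i; apply: measurable_lt_set.
  by apply/measurableT_comp/measurable_mx_mul => //; exact: measurable_Wn1.
apply: measurable_funM; first exact: measurable_cst.
apply: measurable_funB; first apply: measurable_funB; first exact: measurable_cst.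
- apply: measurable_funM; first exact: measurable_cst.
  by apply/measurableT_comp/measurable_mx_mul => //; exact: measurable_mx_cst.
- apply: measurable_funM; first exact: measurable_cst.
  by apply/measurableT_comp/measurable_mx_mul => //; exact: measurable_mx_mul.
Qed.

Lemma measurable_eventB : measurable [set w | eventB (X w) (eps w) Sigma b1 lam eta].
Proof.
have mCi : measurable_mx (fun w => CS21 (X w) Sigma eta *m invmx (CS11 (X w) Sigma eta)).
  apply: measurable_mx_mul; last exact: measurable_invCS11.
  apply/measurable_mx_add; last exact: measurable_mx_cst.
  by apply/measurable_mx_scale/measurable_mx_mul => //; exact: measurable_mx_tr.
apply: measurable_forall => j; apply: measurable_le_set.
  apply/measurableT_comp/measurable_mx_sub => //.
    by apply: measurable_mx_mul => //; exact: measurable_Wn1.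
  by apply/measurable_mx_scale/measurable_mx_mul => //; exact: measurable_mx_tr.
apply: measurable_funB; first exact: measurable_cst.
apply: measurable_funM; first exact: measurable_cst.
by apply/measurableT_comp/measurable_mx_sub => //; exact: measurable_mx_mul.
Qed.

Let y := fun w => X w *m col_mx b1 0 + eps w.

Lemma measurable_oracle_cond : measurable [set w | oracle_cond (X w) (y w) Sigma b1 lam eta].
Proof.
have my : measurable_mx y.
  by apply: measurable_mx_add => //; apply: measurable_mx_mul => //; exact: measurable_mx_cst.
have moracle : measurable_mx (fun w => oracle (X w) (y w) Sigma b1 lam eta).
  apply: measurable_mx_mul.
    apply/measurable_mx_inv/measurable_mx_add; last exact: measurable_mx_cst.
    by apply: measurable_mx_mul => //; exact: measurable_mx_tr.
  apply: measurable_mx_sub; last exact: measurable_mx_cst.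
  by apply: measurable_mx_mul => //; exact: measurable_mx_tr.
apply: measurableI.
- apply: measurable_forall => i; apply: measurable_lt_set; first exact: measurable_cst.
  by apply: measurable_funM => //; exact: measurable_cst.
- apply: measurable_forall => j; apply: measurable_le_set; last exact: measurable_cst.
  apply/measurableT_comp/measurable_funM => //; apply: measurable_mx_add.
    apply: measurable_mx_mul; first exact: measurable_mx_tr.
    by apply: measurable_mx_sub => //; exact: measurable_mx_mul.
  by apply/measurable_mx_scale/measurable_mx_mul.
Qed.
End MeasurableEvents.

Unset Implicit Arguments.
Theorem lemma1 (R : realType) (n q r : nat) (hn : (0 < n)%N) (hq : (0 < q)%N)
  (hr : (0 < r)%N) (sigma : R) (hsigma : 0 < sigma)
  (Sigma : 'M[R]_(q + r)) (hSigma : sym_posdef Sigma)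
  (Sm : 'M[R]_(q + r)) (hSm : is_Sigma_mhalf Sigma Sm)
  (b1 : 'cV[R]_q) (hb1 : forall i, b1 i 0 != 0)
  (lambda eta : R) (hlambda : 0 < lambda) (heta : 0 < eta)
  (d : measure_display) (Omega : measurableType d) (P : probability Omega R)
  (X : Omega -> 'M[R]_(n, q + r)) (eps : Omega -> 'cV[R]_n)
  (hXrows_indep : mutually_indep P (fun (i : 'I_n) (j : 'I_(q + r)) w => X w i j))
  (hXrows_gauss : forall i : 'I_n, gaussian_vec P (fun j w => X w i j) Sigma)
  (heps_gauss : gaussian_vec P (fun k w => eps w k 0) ((sigma ^+ 2) *: 1%:M))
  (hXeps_indep : indep2 P (fun (ij : 'I_n * 'I_(q + r)) w => X w ij.1 ij.2)
                          (fun k w => eps w k 0)) :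
  let betastar : 'cV[R]_(q + r) := col_mx b1 0 in
  let y := fun w => X w *m betastar + eps w in
  (P ([set w | eventA (X w) (eps w) Sigma b1 lambda eta]
       `&` [set w | eventB (X w) (eps w) Sigma b1 lambda eta])
   <= P [set w | sgnv (gEN (X w) (y w) Sm lambda eta) = sgnv betastar])%E.
Proof.
cbv zeta.
have hX : measurable_mx X by move=> i j; exact: (hXrows_gauss i).1.
have heps : measurable_mx eps by move=> i j; rewrite (ord1 j); exact: heps_gauss.1.
set y := fun w => X w *m col_mx b1 0 + eps w.
have -> : [set w | sgnv (gEN (X w) (y w) Sm lambda eta) = sgnv (col_mx b1 0)] =
          [set w | oracle_cond (X w) (y w) Sigma b1 lambda eta].
  apply/seteqP; split => w /=.
  - exact: sign_oracle hSm hSigma heta hb1 hq.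
  - exact: oracle_sign hSm hSigma hlambda heta hb1.
apply: le_measure; rewrite ?inE.
- by apply: measurableI; [exact: measurable_eventA | exact: measurable_eventB].
- exact: measurable_oracle_cond.
- by move=> w [hA hB]; exact: events_oracle_cond hSigma hlambda heta hn hA hB.
Qed.
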